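(* Let $\xi,\zeta$ be stoups, $\Pi,\Gamma_1,\Gamma_2$ finite sequences of tree terms, $A,C$ formulae and $\Xi(\cdot)$ a meta-formula context. If the sequents $\xi;\Pi\to A$ and $\Xi(\zeta;\Gamma_1,A,\Gamma_2)\to C$ are derivable in the calculus $\mathcal{M}'_{2015}$ defined below, then the sequent $\Xi(\xi,\zeta;\Gamma_1,\Pi,\Gamma_2)\to C$ is also derivable in $\mathcal{M}'_{2015}$.
   Context: Formulae are built from a countable set of variables and the constant $\mathbf{1}$ by the binary connectives $\backslash$, $/$, $\cdot$, $\wedge$, $\vee$ and the unary connectives $\langle\rangle$, $[]^{-1}$ (bracket modalities) and $!$ (subexponential). A stoup is a finite multiset of formulae ($\varnothing$ is the empty stoup). A tree term is either a formula or an expression $[\Xi]$ with $\Xi$ a meta-formula; a meta-formula is an expression $\zeta;\Gamma$ where $\zeta$ is a stoup and $\Gamma$ is a finite linearly ordered sequence of tree terms (the empty sequence is written $\Lambda$); $\varnothing;\Gamma$ is written simply $\Gamma$. Comma denotes both concatenation of sequences and multiset union of stoups; $\zeta,A$ is $\zeta$ with one more copy of $A$. A sequent is $\Xi\to C$ with $\Xi$ a meta-formula and $C$ a formula. $\Xi(\Theta)$ denotes a meta-formula with a designated occurrence of a meta-formula $\Theta$, which is either $\Xi$ itself or the content of some bracket $[\Theta]$ occurring at any depth in $\Xi$; $\Xi(\Theta')$ is the result of replacing that occurrence by $\Theta'$. Below $A,B,C,D,A_1,A_2$ are formulae, $\Gamma,\Delta,\Delta_i,\Gamma_i$ sequences of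 tree terms, $\zeta,\zeta',\zeta_i$ stoups, $\Xi$ a meta-formula. Common axioms and rules: axioms $A\to A$ and $\Lambda\to\mathbf 1$; ($/L$) from $\zeta_1;\Gamma\to B$ and $\Xi(\zeta_2;\Delta_1,C,\Delta_2)\to D$ infer $\Xi(\zeta_1,\zeta_2;\Delta_1,C/B,\Gamma,\Delta_2)\to D$; ($/R$) from $\zeta;\Gamma,B\to C$ infer $\zeta;\Gamma\to C/B$; ($\backslash L$) from $\zeta_1;\Gamma\to A$ and $\Xi(\zeta_2;\Delta_1,C,\Delta_2)\to D$ infer $\Xi(\zeta_1,\zeta_2;\Delta_1,\Gamma,A\backslash C,\Delta_2)\to D$; ($\backslash R$) from $\zeta;A,\Gamma\to C$ infer $\zeta;\Gamma\to A\backslash C$; ($\cdot L$) from $\Xi(\zeta;\Delta_1,A,B,\Delta_2)\to D$ infer $\Xi(\zeta;\Delta_1,A\cdot B,\Delta_2)\to D$; ($\cdot R$) from $\zeta_1;\Delta\to A$ and $\zeta_2;\Gamma\to B$ infer $\zeta_1,\zeta_2;\Delta,\Gamma\to A\cdot B$; ($\mathbf1 L$) from $\Xi(\zeta;\Delta_1,\Delta_2)\to A$ infer $\Xi(\zeta;\Delta_1,\mathbf1,\Delta_2)\to A$; ($\vee L$) from $\Xi(\zeta;\Delta_1,A_1,\Delta_2)\to C$ and $\Xi(\zeta;\Delta_1,A_2,\Delta_2)\to C$ infer $\Xi(\zeta;\Delta_1,A_1\vee A_2,\Delta_2)\to C$; ($\vee R_i$, $i=1,2$) from $\Xi\to A_i$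 infer $\Xi\to A_1\vee A_2$; ($\wedge L_i$) from $\Xi(\zeta;\Delta_1,A_i,\Delta_2)\to C$ infer $\Xi(\zeta;\Delta_1,A_1\wedge A_2,\Delta_2)\to C$; ($\wedge R$) from $\Xi\to A_1$ and $\Xi\to A_2$ infer $\Xi\to A_1\wedge A_2$; ($[]^{-1}L$) from $\Xi(\zeta;\Delta_1,A,\Delta_2)\to B$ infer $\Xi(\zeta;\Delta_1,[[]^{-1}A],\Delta_2)\to B$; ($[]^{-1}R$) from $[\Xi]\to A$ infer $\Xi\to []^{-1}A$; ($\langle\rangle L$) from $\Xi(\zeta;\Delta_1,[A],\Delta_2)\to B$ infer $\Xi(\zeta;\Delta_1,\langle\rangle A,\Delta_2)\to B$; ($\langle\rangle R$) from $\Xi\to A$ infer $[\Xi]\to\langle\rangle A$; ($!L$) from $\Xi(\zeta,A;\Gamma_1,\Gamma_2)\to B$ infer $\Xi(\zeta;\Gamma_1,!A,\Gamma_2)\to B$; ($!P$) from $\Xi(\zeta;\Gamma_1,A,\Gamma_2)\to B$ infer $\Xi(\zeta,A;\Gamma_1,\Gamma_2)\to B$. The calculus $\mathcal{M}'_{2015}$ consists of the common axioms and rules together with ($!R'$) from $\zeta;\Lambda\to B$ infer $\zeta;\Lambda\to !B$, provided $\zeta\neq\varnothing$, and ($!C'$) from $\Xi(\zeta_1,\zeta_2;\Gamma_1,[\zeta',\zeta_2;\Gamma_2],\Gamma_3)\to C$ infer $\Xi(\zeta_1,\zeta_2,\zeta';\Gamma_1,\Gamma_2,\Gamma_3)\to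 C$, provided $\zeta_2\neq\varnothing$. Cut is not a rule of the calculus; ''derivable'' means derivable by the listed axioms and rules. *)

From HB Require Import structures.
From mathcomp Require Import all_boot.
From mathcomp Require Import finmap multiset.

Set Implicit Arguments.
Unset Strict Implicit.
Unset Printing Implicit Defensive.

Inductive formula : Type :=
  | Var    : nat -> formula
  | One    : formula
  | Under  : formula -> formula -> formula   (* Under A C  =  A \ C *)
  | Over   : formula -> formula -> formula   (* Over C B   =  C / B *)
  | Prod   : formula -> formula -> formula
  | And    : formula -> formula -> formula
  | Or     : formula -> formula -> formula
  | Diam   : formula -> formula
  | BoxInv : formula -> formula
  | Bang   : formula -> formula.

(* Countable (hence choice) structure on formulae, needed for {mset formula}. *)
Fixpoint enc_formula (A : formula) : GenTree.tree nat :=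
  match A with
  | Var n => GenTree.Leaf n
  | One => GenTree.Node 0 [::]
  | Under A B => GenTree.Node 1 [:: enc_formula A; enc_formula B]
  | Over A B => GenTree.Node 2 [:: enc_formula A; enc_formula B]
  | Prod A B => GenTree.Node 3 [:: enc_formula A; enc_formula B]
  | And A B => GenTree.Node 4 [:: enc_formula A; enc_formula B]
  | Or A B => GenTree.Node 5 [:: enc_formula A; enc_formula B]
  | Diam A => GenTree.Node 6 [:: enc_formula A]
  | BoxInv A => GenTree.Node 7 [:: enc_formula A]
  | Bang A => GenTree.Node 8 [:: enc_formula A]
  end.

Fixpoint dec_formula (t : GenTree.tree nat) : option formula :=
  match t with
  | GenTree.Leaf n => Some (Var n)
  | GenTree.Node 0 [::] => Some One
  | GenTree.Node k [:: t1; t2] =>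
      match dec_formula t1, dec_formula t2 with
      | Some A, Some B =>
          match k with
          | 1 => Some (Under A B)
          | 2 => Some (Over A B)
          | 3 => Some (Prod A B)
          | 4 => Some (And A B)
          | 5 => Some (Or A B)
          | _ => None
          end
      | _, _ => None
      end
  | GenTree.Node k [:: t1] =>
      match dec_formula t1 with
      | Some A =>
          match k with
          | 6 => Some (Diam A)
          | 7 => Some (BoxInv A)
          | 8 => Some (Bang A)
          | _ => None
          end
      | None => None
      end
  | _ => None
  end.

Lemma enc_formulaK : pcancel enc_formula dec_formula.
Proof. by elim=> //= [A -> B ->|A -> B ->|A -> B ->|A -> B ->|A -> B ->|A ->|A ->|A ->]. Qed.

HB.instance Definition _ := Countable.copy formula (pcan_type enc_formulaK).

Definition stoup := {mset formula}%mset.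

(* Tree terms and meta-formulae (mutually defined).
   TF A   : a formula as a tree term;
   TB Xi  : the bracketed tree term [Xi];
   Meta z G : the meta-formula  z ; G  (stoup z, ordered sequence G). *)
Inductive tterm : Type :=
  | TF : formula -> tterm
  | TB : meta -> tterm
with meta : Type :=
  | Meta : stoup -> seq tterm -> meta.

(* Contexts Xi(.) : a meta-formula with a designated occurrence of a
   meta-formula, which is either the whole meta-formula (Hole) or the
   content of some bracket, at any depth. *)
Inductive ctx : Type :=
  | Hole : ctx
  | CBr : stoup -> seq tterm -> ctx -> seq tterm -> ctx.
  (* CBr z L c R  denotes  z ; L, [c(.)], R *)

Fixpoint fill (X : ctx) (T : meta) : meta :=
  match X with
  | Hole => T
  | CBr z L c R => Meta z (L ++ TB (fill c T) :: R)
  end.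

Local Open Scope mset_scope.

Inductive derivable : meta -> formula -> Prop :=
  | d_ax A : derivable (Meta mset0 [:: TF A]) A
  | d_oneR : derivable (Meta mset0 [::]) One
  | d_overL X z1 z2 G D1 D2 B C D :
      derivable (Meta z1 G) B ->
      derivable (fill X (Meta z2 (D1 ++ TF C :: D2))) D ->
      derivable (fill X (Meta (z1 `+` z2) (D1 ++ TF (Over C B) :: G ++ D2))) D
  | d_overR z G B C :
      derivable (Meta z (G ++ [:: TF B])) C ->
      derivable (Meta z G) (Over C B)
  | d_underL X z1 z2 G D1 D2 A C D :
      derivable (Meta z1 G) A ->
      derivable (fill X (Meta z2 (D1 ++ TF C :: D2))) D ->
      derivable (fill X (Meta (z1 `+` z2) (D1 ++ G ++ TF (Under A C) :: D2))) D
  | d_underR z G A C :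
      derivable (Meta z (TF A :: G)) C ->
      derivable (Meta z G) (Under A C)
  | d_prodL X z D1 D2 A B D :
      derivable (fill X (Meta z (D1 ++ TF A :: TF B :: D2))) D ->
      derivable (fill X (Meta z (D1 ++ TF (Prod A B) :: D2))) D
  | d_prodR z1 z2 D G A B :
      derivable (Meta z1 D) A ->
      derivable (Meta z2 G) B ->
      derivable (Meta (z1 `+` z2) (D ++ G)) (Prod A B)
  | d_oneL X z D1 D2 A :
      derivable (fill X (Meta z (D1 ++ D2))) A ->
      derivable (fill X (Meta z (D1 ++ TF One :: D2))) A
  | d_orL X z D1 D2 A1 A2 C :
      derivable (fill X (Meta z (D1 ++ TF A1 :: D2))) C ->
      derivable (fill X (Meta z (D1 ++ TF A2 :: D2))) C ->
      derivable (fill X (Meta z (D1 ++ TF (Or A1 A2) :: D2))) C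
  | d_orR1 Xi A1 A2 : derivable Xi A1 -> derivable Xi (Or A1 A2)
  | d_orR2 Xi A1 A2 : derivable Xi A2 -> derivable Xi (Or A1 A2)
  | d_andL1 X z D1 D2 A1 A2 C :
      derivable (fill X (Meta z (D1 ++ TF A1 :: D2))) C ->
      derivable (fill X (Meta z (D1 ++ TF (And A1 A2) :: D2))) C
  | d_andL2 X z D1 D2 A1 A2 C :
      derivable (fill X (Meta z (D1 ++ TF A2 :: D2))) C ->
      derivable (fill X (Meta z (D1 ++ TF (And A1 A2) :: D2))) C
  | d_andR Xi A1 A2 :
      derivable Xi A1 -> derivable Xi A2 -> derivable Xi (And A1 A2)
  | d_boxinvL X z D1 D2 A B :
      derivable (fill X (Meta z (D1 ++ TF A :: D2))) B ->
      derivable (fill X (Meta z (D1 ++ TB (Meta mset0 [:: TF (BoxInv A)]) :: D2))) B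
  | d_boxinvR Xi A :
      derivable (Meta mset0 [:: TB Xi]) A ->
      derivable Xi (BoxInv A)
  | d_diamL X z D1 D2 A B :
      derivable (fill X (Meta z (D1 ++ TB (Meta mset0 [:: TF A]) :: D2))) B ->
      derivable (fill X (Meta z (D1 ++ TF (Diam A) :: D2))) B
  | d_diamR Xi A :
      derivable Xi A ->
      derivable (Meta mset0 [:: TB Xi]) (Diam A)
  | d_bangL X z G1 G2 A B :
      derivable (fill X (Meta (z `+` [mset A]) (G1 ++ G2))) B ->
      derivable (fill X (Meta z (G1 ++ TF (Bang A) :: G2))) B
  | d_bangP X z G1 G2 A B :
      derivable (fill X (Meta z (G1 ++ TF A :: G2))) B ->
      derivable (fill X (Meta (z `+` [mset A]) (G1 ++ G2))) B
  | d_bangR' z B :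
      z != mset0 ->
      derivable (Meta z [::]) B ->
      derivable (Meta z [::]) (Bang B)
  | d_bangC' X z1 z2 z' G1 G2 G3 C :
      z2 != mset0 ->
      derivable (fill X (Meta (z1 `+` z2) (G1 ++ TB (Meta (z' `+` z2) G2) :: G3))) C ->
      derivable (fill X (Meta (z1 `+` z2 `+` z') (G1 ++ G2 ++ G3))) C.

(* Cut is admissible by Okada's phase-semantic argument over the syntactic
   phase space.  Meta-formulae form a monoid under [mcat] (concatenation of the
   sequences, union of the stoups).  A set of meta-formulae is closed when it
   contains every m that passes all the cut-free tests passed by its members,
   a test being a frame f (a bracket context with material on both sides of
   the hole) together with a succedent C, passed by m when plug f m -> C is
   derivable.  Interpreting each formula A as a closed set [sem A], Okada's lemma
   gives  mform A \in sem A \subset {m | m -> A derivable}.  Conversely, if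
   T -> C is derivable, every instance of T lies in [sem C], where an instance
   replaces each formula occurrence B by a member of [sem B] and each stoup
   formula B by a stoup in [sem B].  For the cut, instantiate the occurrence of
   A by (xi; Pi), which lies in [sem A] by the first premise, and everything else
   by itself; the second premise puts the result in [sem C], hence it is
   derivable. *)

From mathcomp Require Import all_boot.
From mathcomp Require Import finmap multiset.
From mathcomp Require Import zify.

Set Implicit Arguments.
Unset Strict Implicit.
Unset Printing Implicit Defensive.

Local Open Scope mset_scope.

Definition mnil : meta := Meta mset0 [::].

Definition mcat (m1 m2 : meta) : meta :=
  let: Meta z1 G1 := m1 in let: Meta z2 G2 := m2 in Meta (z1 `+` z2) (G1 ++ G2).

Arguments mcat : simpl never.

Definition mstoup (w : stoup) : meta := Meta w [::].
Definition mform (A : formula) : meta := Meta mset0 [:: TF A].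
Definition mbrack (m : meta) : meta := Meta mset0 [:: TB m].

Ltac stoup_eq := apply/msetP => ?; rewrite ?msetE2 ?mset0E; lia.

Ltac meta_eq :=
  rewrite /mcat /mstoup /mform /mbrack /mnil /=; congr Meta;
  solve [stoup_eq | by do 2 rewrite ?cats0 -?catA /=].

Lemma mcatA a b c : mcat a (mcat b c) = mcat (mcat a b) c.
Proof. by case: a b c => ? ? [? ?] [? ?]; meta_eq. Qed.

Lemma mcat0m m : mcat mnil m = m.
Proof. by case: m => ? ?; meta_eq. Qed.

Lemma mcatm0 m : mcat m mnil = m.
Proof. by case: m => ? ?; meta_eq. Qed.

Lemma mstoupD w1 w2 : mstoup (w1 `+` w2) = mcat (mstoup w1) (mstoup w2).
Proof. by meta_eq. Qed.

Lemma mcat_mstoupC w m : mcat (mstoup w) m = mcat m (mstoup w).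
Proof. by case: m => ? ?; meta_eq. Qed.

Lemma mcat_mstoupCA w a b : mcat (mstoup w) (mcat a b) = mcat a (mcat (mstoup w) b).
Proof. by rewrite mcatA mcat_mstoupC -mcatA. Qed.

Record frame := Frame { fhole : ctx; fleft : meta; fright : meta }.

Definition plug (f : frame) (m : meta) : meta :=
  fill (fhole f) (mcat (mcat (fleft f) m) (fright f)).

Definition frame1 : frame := Frame Hole mnil mnil.

Fixpoint ctx_comp (X Y : ctx) : ctx :=
  if X is CBr z L c R then CBr z L (ctx_comp c Y) R else Y.

Definition frame_comp (f g : frame) : frame :=
  let: Frame X (Meta zl Gl as l) (Meta zr Gr as r) := f in
  match g with
  | Frame Hole l' r' => Frame X (mcat l l') (mcat r' r)
  | Frame (CBr z L c R) l' r' =>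
      Frame (ctx_comp X (CBr (zl `+` z `+` zr) (Gl ++ L) c (R ++ Gr))) l' r'
  end.

Lemma fill_ctx_comp X Y T : fill (ctx_comp X Y) T = fill X (fill Y T).
Proof. by elim: X => //= z L c ->. Qed.

Lemma plug_comp f g m : plug f (plug g m) = plug (frame_comp f g) m.
Proof.
case: f g => X [zl Gl] [zr Gr] [[|z L c R] l r]; rewrite /plug /= ?fill_ctx_comp.
  by rewrite !mcatA.
by congr fill; meta_eq.
Qed.

Lemma plug1 m : plug frame1 m = m.
Proof. by rewrite /plug mcat0m mcatm0. Qed.

Lemma mcat_plugl n m : mcat n m = plug (Frame Hole n mnil) m.
Proof. by rewrite /plug mcatm0. Qed.

Lemma mcat_plugr n m : mcat m n = plug (Frame Hole mnil n) m.
Proof. by rewrite /plug mcat0m. Qed.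

Definition brack_frame : frame := Frame (CBr mset0 [::] Hole [::]) mnil mnil.

Lemma mbrack_plug m : mbrack m = plug brack_frame m.
Proof. by rewrite /plug mcat0m mcatm0. Qed.

Definition cl (S : meta -> Prop) (m : meta) : Prop :=
  forall f C, (forall s, S s -> derivable (plug f s) C) -> derivable (plug f m) C.

Definition closed (S : meta -> Prop) : Prop := forall m, cl S m -> S m.

Lemma cl_sub S m : S m -> cl S m.
Proof. by move=> Sm f C; apply. Qed.

Lemma cl_closed S : closed (cl S).
Proof. by move=> m clm f C HS; apply: clm => s; apply. Qed.

Lemma cl_derivable S m C : cl S m -> (forall s, S s -> derivable s C) -> derivable m C.
Proof. by move=> clm HS; rewrite -[m]plug1; apply: clm => s; rewrite plug1; apply: HS. Qed.

Lemma closed_cl_plug Y S f p : closed Y -> cl S p ->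
  (forall s, S s -> Y (plug f s)) -> Y (plug f p).
Proof.
move=> cY clp YS; apply: cY => g C Hg; rewrite plug_comp.
by apply: clp => s /YS Ys; rewrite -plug_comp; apply: Hg.
Qed.

Lemma closed_cl Y S p : closed Y -> cl S p -> (forall s, S s -> Y s) -> Y p.
Proof.
move=> cY clp YS; rewrite -[p]plug1.
by apply: closed_cl_plug cY clp _ => s; rewrite plug1; apply: YS.
Qed.

Lemma closed_rule Y P Q : closed Y ->
  (forall f C, derivable (plug f P) C -> derivable (plug f Q) C) -> Y P -> Y Q.
Proof. by move=> cY PQ YP; apply: cY => f C HY; apply/PQ/HY. Qed.

Definition pure_stoup (m : meta) : Prop := exists2 w, w != mset0 & m = mstoup w.

Fixpoint sem (A : formula) : meta -> Prop :=
  match A with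
  | Var n => fun m => derivable m (Var n)
  | One => cl (eq mnil)
  | Under A C => fun m => forall n, sem A n -> sem C (mcat n m)
  | Over C B => fun m => forall n, sem B n -> sem C (mcat m n)
  | Prod A B => cl (fun m => exists a b, [/\ sem A a, sem B b & m = mcat a b])
  | And A B => fun m => sem A m /\ sem B m
  | Or A B => cl (fun m => sem A m \/ sem B m)
  | Diam A => cl (fun m => exists2 a, sem A a & m = mbrack a)
  | BoxInv A => fun m => sem A (mbrack m)
  | Bang A => cl (fun m => pure_stoup m /\ sem A m)
  end.

Lemma sem_closed A : closed (sem A).
Proof.
elim: A => [n||A _ C IHC|C IHC B _|A _ B _|A IHA B IHB|A _ B _|A _|A IHA|A _] /=;
  try exact: cl_closed.
- by move=> m clm; apply: cl_derivable clm _.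
- move=> m clm n An; rewrite mcat_plugl.
  by apply: closed_cl_plug IHC clm _ => s; rewrite -mcat_plugl; apply.
- move=> m clm n Bn; rewrite mcat_plugr.
  by apply: closed_cl_plug IHC clm _ => s; rewrite -mcat_plugr; apply.
- move=> m clm; split.
    by apply: closed_cl IHA clm _ => s [].
  by apply: closed_cl IHB clm _ => s [].
- move=> m clm; rewrite mbrack_plug.
  by apply: closed_cl_plug IHA clm _ => s; rewrite -mbrack_plug.
Qed.

Arguments sem_closed : clear implicits.

Lemma eq_derivable T T' C : derivable T C -> T = T' -> derivable T' C.
Proof. by move=> + <-. Qed.

Lemma plug_Meta X zl Gl zr Gr z G :
  plug (Frame X (Meta zl Gl) (Meta zr Gr)) (Meta z G) =
  fill X (Meta (zl `+` zr `+` z) (Gl ++ G ++ Gr)).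
Proof. by rewrite /plug; congr fill; meta_eq. Qed.

Lemma mset1_neq0 (A : formula) : [mset A] != mset0.
Proof. by apply/eqP => /msetP/(_ A); rewrite msetnxx mset0E. Qed.

Lemma closed_mform_mstoup Y A : closed Y -> Y (mform A) -> Y (mstoup [mset A]).
Proof.
move=> cY; apply: closed_rule cY _ => -[X [zl Gl] [zr Gr]] D.
by rewrite !plug_Meta msetD0; apply: d_bangP.
Qed.

Lemma plug_underL f n A C D : derivable n A -> derivable (plug f (mform C)) D ->
  derivable (plug f (mcat n (mform (Under A C)))) D.
Proof.
case: f n => X [zl Gl] [zr Gr] [zn Gn] An; rewrite !plug_Meta => H.
by apply: eq_derivable (d_underL An H) _; congr fill; meta_eq.
Qed.

Lemma plug_overL f n B C D : derivable n B -> derivable (plug f (mform C)) D ->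
  derivable (plug f (mcat (mform (Over C B)) n)) D.
Proof.
case: f n => X [zl Gl] [zr Gr] [zn Gn] Bn; rewrite !plug_Meta => H.
by apply: eq_derivable (d_overL Bn H) _; congr fill; meta_eq.
Qed.

Lemma plug_bangC f w2 w' n D : w2 != mset0 ->
  derivable (plug f (mcat (mstoup w2) (mbrack (mcat (mstoup (w' `+` w2)) n)))) D ->
  derivable (plug f (mcat (mstoup (w2 `+` w')) n)) D.
Proof.
case: f n => X [zl Gl] [zr Gr] [zn Gn] w20.
have -> : mcat (mstoup (w' `+` w2)) (Meta zn Gn) = Meta (w' `+` zn `+` w2) Gn by meta_eq.
rewrite !plug_Meta => H.
apply: eq_derivable (d_bangC' (X := X) (z1 := zl `+` zr) (z' := w' `+` zn)
  (G1 := Gl) (G2 := Gn) (G3 := Gr) w20 (eq_derivable H _)) _; by congr fill; meta_eq.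
Qed.

Lemma okada A : sem A (mform A) /\ forall m, sem A m -> derivable m A.
Proof.
elim: A => [n||A [iA dA] C [iC dC]|C [iC dC] B [iB dB]|A [iA dA] B [iB dB]
  |A [iA dA] B [iB dB]|A [iA dA] B [iB dB]|A [iA dA]|A [iA dA]|A [iA dA]] /=.
- by split=> //; apply: d_ax.
- split; last by move=> m /cl_derivable; apply=> _ <-; apply: d_oneR.
  by move=> [X [zl Gl] [zr Gr]] D /(_ _ erefl); rewrite !plug_Meta; apply: d_oneL.
- split; last by move=> [z G] /(_ _ iA) /dC; rewrite /mcat /= mset0D; apply: d_underR.
  by move=> n /dA An; apply: closed_rule (sem_closed C) _ iC => f D; apply: plug_underL.
- split; last by move=> [z G] /(_ _ iB) /dC; rewrite /mcat /= msetD0; apply: d_overR.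
  by move=> n /dB Bn; apply: closed_rule (sem_closed C) _ iC => f D; apply: plug_overL.
- split; last first.
    move=> m /cl_derivable; apply=> _ [[za Ga] [[zb Gb] [Ha Hb ->]]].
    exact: d_prodR (dA _ Ha) (dB _ Hb).
  have AB : exists a b, [/\ sem A a, sem B b & Meta mset0 [:: TF A; TF B] = mcat a b].
    by exists (mform A), (mform B); rewrite /mcat /= mset0D.
  by move=> [X [zl Gl] [zr Gr]] D /(_ _ AB); rewrite !plug_Meta; apply: d_prodL.
- split; last by move=> m [Am Bm]; apply: d_andR; [apply: dA | apply: dB].
  split; [apply: closed_rule (sem_closed A) _ iA | apply: closed_rule (sem_closed B) _ iB];
    move=> [X [zl Gl] [zr Gr]] D; rewrite !plug_Meta; [apply: d_andL1 | apply: d_andL2].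
- split; last first.
    move=> m /cl_derivable; apply=> s [/dA|/dB]; [apply: d_orR1 | apply: d_orR2].
  move=> [X [zl Gl] [zr Gr]] D H.
  by move: (H _ (or_introl iA)) (H _ (or_intror iB)); rewrite !plug_Meta; apply: d_orL.
- split; last first.
    by move=> m /cl_derivable; apply=> _ [a /dA Aa ->]; apply: d_diamR.
  move=> [X [zl Gl] [zr Gr]] D /(_ _ (ex_intro2 _ _ _ iA erefl)).
  by rewrite !plug_Meta; apply: d_diamL.
- split; last by move=> m /dA; apply: d_boxinvR.
  apply: closed_rule (sem_closed A) _ iA => -[X [zl Gl] [zr Gr]] D.
  by rewrite !plug_Meta; apply: d_boxinvL.
- split; last first.
    by move=> m /cl_derivable; apply=> _ [[w w0 ->] /dA]; apply: d_bangR'.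
  have bangA : pure_stoup (mstoup [mset A]) /\ sem A (mstoup [mset A]).
    split; first by exists [mset A]; first exact: mset1_neq0.
    exact: closed_mform_mstoup (sem_closed A) iA.
  move=> [X [zl Gl] [zr Gr]] D /(_ _ bangA).
  by rewrite !plug_Meta msetD0; apply: d_bangL.
Qed.

Lemma sem_mform A : sem A (mform A).
Proof. exact: (okada A).1. Qed.

Lemma sem_derivable A m : sem A m -> derivable m A.
Proof. exact: (okada A).2. Qed.

Section StoupInstance.

Variable P : formula -> stoup -> Prop.

Inductive stoup_inst : stoup -> stoup -> Prop :=
  | stoup_inst0 : stoup_inst mset0 mset0
  | stoup_instS A v z w : P A v -> stoup_inst z w -> stoup_inst (A +` z) (v `+` w).

Lemma stoup_instD z1 w1 z2 w2 :
  stoup_inst z1 w1 -> stoup_inst z2 w2 -> stoup_inst (z1 `+` z2) (w1 `+` w2).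
Proof.
elim=> [|A v z w Av _ IH] H2; first by rewrite !mset0D.
by rewrite -!msetDA; apply: stoup_instS (IH H2).
Qed.

Lemma stoup_inst1 A v : P A v -> stoup_inst [mset A] v.
Proof. by move=> Av; rewrite -[v]msetD0 -[[mset A]]msetD0; apply: stoup_instS stoup_inst0. Qed.

Lemma stoup_inst0_inv w : stoup_inst mset0 w -> w = mset0.
Proof.
move E: mset0 => z H; case: H E => // A v z' w' _ _ /msetP/(_ A).
by rewrite mset1DE eqxx mset0E add1n.
Qed.

Lemma stoup_inst1_inv A w : stoup_inst [mset A] w -> P A w.
Proof.
move E: [mset A] => z H; case: H E => [/msetP/(_ A)|B v z' w' Bv H' E].
  by rewrite msetnxx mset0E.
have BA : B = A by apply/mset1P; rewrite E mset1D1.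
have z'0 : z' = mset0 by rewrite -(msetD1K B z') -E BA msetBxx.
by move: H'; rewrite z'0 => /stoup_inst0_inv ->; rewrite msetD0 -BA.
Qed.

Lemma stoupD_inst_inv z1 z2 w : stoup_inst (z1 `+` z2) w ->
  exists w1 w2, [/\ stoup_inst z1 w1, stoup_inst z2 w2 & w = w1 `+` w2].
Proof.
move E: (z1 `+` z2) => z0 H; elim: H z1 z2 E => [|A v z w' Av _ IH] z1 z2 E.
  have z10 : z1 = mset0 by rewrite -(msetKDI z1 z2) E msetI0.
  have z20 : z2 = mset0 by rewrite -(msetDKI z2 z1) E mset0I.
  by exists mset0, mset0; rewrite z10 z20 msetD0; split; constructor.
wlog Az1 : z1 z2 E / A \in z1.
  move=> wlog; have : A \in z1 `+` z2 by rewrite E mset1D1.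
  rewrite in_msetD => /orP[Az1|Az2]; first exact: wlog.
  have [w2 [w1 [H2 H1 ->]]] := wlog z2 z1 (etrans (msetDC _ _) E) Az2.
  by exists w1, w2; rewrite msetDC.
have z1E := msetB1K Az1.
have [w1 [w2 [H1 H2 ->]]] : exists w1 w2,
    [/\ stoup_inst (z1 `\ A) w1, stoup_inst z2 w2 & w' = w1 `+` w2].
  by apply: IH; rewrite -(msetD1K A z) -E -{2}z1E -msetDA msetD1K.
by exists (v `+` w1), w2; rewrite msetDA -z1E; split=> //; apply: stoup_instS.
Qed.

Lemma stoup_inst_neq0 z w : (forall A v, P A v -> v != mset0) ->
  stoup_inst z w -> z != mset0 -> w != mset0.
Proof.
move=> Pneq0 [|A v z' w' /Pneq0 v0 _ _]; first by rewrite eqxx.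
by apply: contraNneq v0 => vw0; rewrite -(msetKDI v w') vw0 msetI0.
Qed.

End StoupInstance.

(* Stoup formulae are instantiated by nonempty stoups only: this is what makes
   the side conditions of !R' and !C' hold for instances. *)
Definition stoup_witness (A : formula) (v : stoup) : Prop := v != mset0 /\ sem A (mstoup v).

Notation inst_stoup := (stoup_inst stoup_witness).

Inductive inst : meta -> meta -> Prop :=
  | inst_Meta z G w g : inst_stoup z w -> inst_seq G g -> inst (Meta z G) (mcat (mstoup w) g)
with inst_seq : seq tterm -> meta -> Prop :=
  | inst_nil : inst_seq [::] mnil
  | inst_consF A G a g : sem A a -> inst_seq G g -> inst_seq (TF A :: G) (mcat a g)
  | inst_consB T G t g : inst T t -> inst_seq G g -> inst_seq (TB T :: G) (mcat (mbrack t) g).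

Lemma inst_Meta_inv z G m : inst (Meta z G) m ->
  exists w g, [/\ inst_stoup z w, inst_seq G g & m = mcat (mstoup w) g].
Proof. by move=> H; inversion H; exists w, g. Qed.

Lemma inst_seq_nil_inv g : inst_seq [::] g -> g = mnil.
Proof. by move=> H; inversion H. Qed.

Lemma inst_seq_consF_inv A G m : inst_seq (TF A :: G) m ->
  exists a g, [/\ sem A a, inst_seq G g & m = mcat a g].
Proof. by move=> H; inversion H; exists a, g. Qed.

Lemma inst_seq_consB_inv T G m : inst_seq (TB T :: G) m ->
  exists t g, [/\ inst T t, inst_seq G g & m = mcat (mbrack t) g].
Proof. by move=> H; inversion H; exists t, g. Qed.

Lemma inst_seq_cat G1 G2 g1 g2 :
  inst_seq G1 g1 -> inst_seq G2 g2 -> inst_seq (G1 ++ G2) (mcat g1 g2).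
Proof.
elim=> [|A G a g Aa _ IH|T G t g Tt _ IH] H2; first by rewrite mcat0m.
  by rewrite -mcatA; apply: inst_consF (IH H2).
by rewrite -mcatA; apply: inst_consB (IH H2).
Qed.

Lemma inst_seq_cat_inv G1 G2 m : inst_seq (G1 ++ G2) m ->
  exists g1 g2, [/\ inst_seq G1 g1, inst_seq G2 g2 & m = mcat g1 g2].
Proof.
elim: G1 m => [|[A|T] G1 IH] m /=.
- by move=> H; exists mnil, m; rewrite mcat0m; split=> //; apply: inst_nil.
- move=> /inst_seq_consF_inv [a [g [Aa /IH [g1 [g2 [H1 H2 ->]]] ->]]].
  by exists (mcat a g1), g2; rewrite mcatA; split=> //; apply: inst_consF.
- move=> /inst_seq_consB_inv [t [g [Tt /IH [g1 [g2 [H1 H2 ->]]] ->]]].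
  by exists (mcat (mbrack t) g1), g2; rewrite mcatA; split=> //; apply: inst_consB.
Qed.

Lemma inst_seq1F A a : inst_seq [:: TF A] a <-> sem A a.
Proof.
split; last by move=> Aa; rewrite -[a]mcatm0; apply: inst_consF Aa inst_nil.
by move=> /inst_seq_consF_inv [a' [g [Aa /inst_seq_nil_inv -> ->]]]; rewrite mcatm0.
Qed.

Lemma inst_seq1B T t : inst T t -> inst_seq [:: TB T] (mbrack t).
Proof. by move=> Tt; rewrite -[mbrack t]mcatm0; apply: inst_consB Tt inst_nil. Qed.

Lemma inst_seq1B_inv T m : inst_seq [:: TB T] m -> exists2 t, inst T t & m = mbrack t.
Proof.
by move=> /inst_seq_consB_inv [t [g [Tt /inst_seq_nil_inv -> ->]]]; exists t; rewrite ?mcatm0.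
Qed.

Lemma inst_Meta0 G m : inst (Meta mset0 G) m <-> inst_seq G m.
Proof.
have mstoup0 : mstoup mset0 = mnil by [].
split; last by move=> Gm; rewrite -[m]mcat0m -mstoup0; apply: inst_Meta Gm; apply: stoup_inst0.
by move=> /inst_Meta_inv [w [g [/stoup_inst0_inv -> Gg ->]]]; rewrite mstoup0 mcat0m.
Qed.

Lemma inst_mform A a : inst (mform A) a <-> sem A a.
Proof. by rewrite inst_Meta0 inst_seq1F. Qed.

Lemma stoup_witness_mset1 A : stoup_witness A [mset A].
Proof. split; [exact: mset1_neq0 | exact: closed_mform_mstoup (sem_closed A) (sem_mform A)]. Qed.

Lemma inst_stoup_refl z : inst_stoup z z.
Proof.
rewrite -(seq_mset_id z); elim: (enum_mset z) => [|A s IH].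
  have -> : seq_mset [::] = mset0 :> stoup by apply/msetP => x; rewrite mset_seqE mset0E.
  exact: stoup_inst0.
by rewrite mset_cons; apply: stoup_instS (stoup_witness_mset1 A) IH.
Qed.

Lemma inst_refl T : inst T T.
Proof.
move: T; fix IH 1 => -[z G].
have {2}-> : Meta z G = mcat (mstoup z) (Meta mset0 G) by meta_eq.
apply: inst_Meta (inst_stoup_refl z) _.
move: G; fix IHG 1 => -[|[A|T] G].
- exact: inst_nil.
- have -> : Meta mset0 (TF A :: G) = mcat (mform A) (Meta mset0 G) by meta_eq.
  exact: inst_consF (sem_mform A) (IHG G).
- have -> : Meta mset0 (TB T :: G) = mcat (mbrack T) (Meta mset0 G) by meta_eq.
  exact: inst_consB (IH T) (IHG G).
Qed.

Lemma inst_seq_refl G : inst_seq G (Meta mset0 G).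
Proof. exact/inst_Meta0/inst_refl. Qed.

Lemma inst_fill X T t : inst T t -> inst (fill X T) (fill X t).
Proof.
elim: X => [|z L c IH R] //= Tt.
have -> : Meta z (L ++ TB (fill c t) :: R) =
    mcat (mstoup z) (mcat (Meta mset0 L) (mcat (mbrack (fill c t)) (Meta mset0 R))).
  by meta_eq.
apply: inst_Meta (inst_stoup_refl z) _.
exact: inst_seq_cat (inst_seq_refl L) (inst_consB (IH Tt) (inst_seq_refl R)).
Qed.

Lemma inst_fill_inv X T m : inst (fill X T) m ->
  exists f t, [/\ inst T t, m = plug f t &
    forall T' t', inst T' t' -> inst (fill X T') (plug f t')].
Proof.
elim: X m => [|z L c IH R] m /=.
  by move=> Tm; exists frame1, m; rewrite plug1; split=> // T' t'; rewrite plug1.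
move=> /inst_Meta_inv [w [g [zw /inst_seq_cat_inv [gL [g' [HL]]]]]].
move=> /inst_seq_consB_inv [tc [gR [/IH [f [t [Tt -> Hf]]] HR ->]]] -> ->.
pose f' := frame_comp (Frame Hole (mcat (mstoup w) gL) gR) (frame_comp brack_frame f).
have E t' : mcat (mstoup w) (mcat gL (mcat (mbrack (plug f t')) gR)) = plug f' t'.
  by rewrite -!plug_comp -mbrack_plug /plug /= !mcatA.
exists f', t; rewrite E; split=> // T' t' /Hf Tt'.
by rewrite -E; apply: inst_Meta zw _; apply: inst_seq_cat HL (inst_consB Tt' HR).
Qed.

Definition inst_frame X z D1 D2 f : Prop :=
  forall z' S w sm, inst_stoup z' w -> inst_seq S sm ->
    inst (fill X (Meta (z `+` z') (D1 ++ S ++ D2))) (plug f (mcat (mstoup w) sm)).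

Lemma inst_fill_focus X z z' D1 S D2 m :
  inst (fill X (Meta (z `+` z') (D1 ++ S ++ D2))) m ->
  exists f w sm, [/\ inst_frame X z D1 D2 f, inst_stoup z' w, inst_seq S sm &
    m = plug f (mcat (mstoup w) sm)].
Proof.
move=> /inst_fill_inv [f [t [/inst_Meta_inv [w [g [/stoupD_inst_inv [w1 [w2 [H1 H2 ->]]]]]]]]].
move=> /inst_seq_cat_inv [d1 [g' [HD1 /inst_seq_cat_inv [sm [d2 [HS HD2 ->]]] ->]]] -> -> Hf.
pose f' := frame_comp f (Frame Hole (mcat (mstoup w1) d1) d2).
have E w' sm' : plug f (mcat (mstoup (w1 `+` w')) (mcat d1 (mcat sm' d2))) =
    plug f' (mcat (mstoup w') sm').
  rewrite -plug_comp; congr plug; rewrite /plug /= mstoupD -!mcatA.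
  by congr mcat; rewrite mcat_mstoupCA.
exists f', w2, sm; rewrite E; split=> // z'' S' w' sm' Hw' HS'.
rewrite -E; apply: Hf; apply: inst_Meta (stoup_instD H1 Hw') _.
exact: inst_seq_cat HD1 (inst_seq_cat HS' HD2).
Qed.

Lemma inst_frame_seq X z D1 D2 f S sm : inst_frame X z D1 D2 f -> inst_seq S sm ->
  inst (fill X (Meta z (D1 ++ S ++ D2))) (plug f sm).
Proof. by move=> Hf /(Hf _ _ _ _ (stoup_inst0 _)); rewrite msetD0 mcat0m. Qed.

Lemma inst_frame_formula X z D1 D2 f B b : inst_frame X z D1 D2 f -> sem B b ->
  inst (fill X (Meta z (D1 ++ TF B :: D2))) (plug f b).
Proof. by move=> Hf /inst_seq1F; apply: inst_frame_seq Hf. Qed.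

Lemma inst_fill_focus_seq X z D1 S D2 m : inst (fill X (Meta z (D1 ++ S ++ D2))) m ->
  exists f sm, [/\ inst_frame X z D1 D2 f, inst_seq S sm & m = plug f sm].
Proof.
rewrite -{1}[z]msetD0 => /inst_fill_focus [f [w [sm [Hf /stoup_inst0_inv -> HS ->]]]].
by exists f, sm; rewrite mcat0m.
Qed.

Lemma inst_fill_focus_formula X z D1 B D2 m : inst (fill X (Meta z (D1 ++ TF B :: D2))) m ->
  exists f b, [/\ inst_frame X z D1 D2 f, sem B b & m = plug f b].
Proof.
by move=> /(inst_fill_focus_seq (S := [:: TF B])) [f [b [Hf /inst_seq1F Bb ->]]]; exists f, b.
Qed.

Definition valid (T : meta) (C : formula) : Prop := forall m, inst T m -> sem C m.

Lemma valid_ax A : valid (mform A) A.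
Proof. by move=> m /inst_mform. Qed.

Lemma valid_oneR : valid mnil One.
Proof. by move=> m /inst_Meta0 /inst_seq_nil_inv ->; apply: cl_sub. Qed.

Lemma valid_overL X z1 z2 G D1 D2 B C D :
  valid (Meta z1 G) B -> valid (fill X (Meta z2 (D1 ++ TF C :: D2))) D ->
  valid (fill X (Meta (z1 `+` z2) (D1 ++ TF (Over C B) :: G ++ D2))) D.
Proof.
move=> VB VD m; rewrite msetDC => /(inst_fill_focus (S := TF (Over C B) :: G)).
move=> [f [w [sm [Hf Hw /inst_seq_consF_inv [p [g [Hp HG ->]]] ->]]]].
by rewrite mcat_mstoupCA; apply/VD/(inst_frame_formula Hf)/Hp/VB/inst_Meta.
Qed.

Lemma valid_overR z G B C :
  valid (Meta z (G ++ [:: TF B])) C -> valid (Meta z G) (Over C B).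
Proof.
move=> VC _ /inst_Meta_inv [w [g [Hw HG ->]]] n Bn.
by rewrite -mcatA; apply/VC/inst_Meta/inst_seq_cat/inst_seq1F.
Qed.

Lemma valid_underL X z1 z2 G D1 D2 A C D :
  valid (Meta z1 G) A -> valid (fill X (Meta z2 (D1 ++ TF C :: D2))) D ->
  valid (fill X (Meta (z1 `+` z2) (D1 ++ G ++ TF (Under A C) :: D2))) D.
Proof.
move=> VA VD m; rewrite msetDC -cat_rcons -cats1 => /inst_fill_focus.
move=> [f [w [sm [Hf Hw /inst_seq_cat_inv [g [p [HG /inst_seq1F Hp ->]]] ->]]]].
by rewrite mcatA; apply/VD/(inst_frame_formula Hf)/Hp/VA/inst_Meta.
Qed.

Lemma valid_underR z G A C :
  valid (Meta z (TF A :: G)) C -> valid (Meta z G) (Under A C).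
Proof.
move=> VC _ /inst_Meta_inv [w [g [Hw HG ->]]] n An.
by rewrite -mcat_mstoupCA; apply/VC/inst_Meta/inst_consF.
Qed.

Lemma valid_prodL X z D1 D2 A B D :
  valid (fill X (Meta z (D1 ++ TF A :: TF B :: D2))) D ->
  valid (fill X (Meta z (D1 ++ TF (Prod A B) :: D2))) D.
Proof.
move=> VD m /inst_fill_focus_formula [f [p [Hf Hp ->]]].
apply: closed_cl_plug (sem_closed D) Hp _ => _ [a [b [Aa Bb ->]]].
apply/VD/(inst_frame_seq (S := [:: TF A; TF B]) Hf).
by apply: (inst_seq_cat (G1 := [:: TF A])); apply/inst_seq1F.
Qed.

Lemma valid_prodR z1 z2 D G A B :
  valid (Meta z1 D) A -> valid (Meta z2 G) B -> valid (Meta (z1 `+` z2) (D ++ G)) (Prod A B).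
Proof.
move=> VA VB m /inst_Meta_inv [w [dg [/stoupD_inst_inv [w1 [w2 [H1 H2 ->]]]]]].
move=> /inst_seq_cat_inv [d [g [HD HG ->]]] ->; apply: cl_sub.
exists (mcat (mstoup w1) d), (mcat (mstoup w2) g); split.
- exact/VA/inst_Meta.
- exact/VB/inst_Meta.
- by rewrite mstoupD -!mcatA; congr mcat; rewrite mcat_mstoupCA.
Qed.

Lemma valid_oneL X z D1 D2 A :
  valid (fill X (Meta z (D1 ++ D2))) A -> valid (fill X (Meta z (D1 ++ TF One :: D2))) A.
Proof.
move=> VA m /inst_fill_focus_formula [f [p [Hf Hp ->]]].
apply: closed_cl_plug (sem_closed A) Hp _ => _ <-.
exact/VA/(inst_frame_seq (S := [::]) Hf)/inst_nil.
Qed.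

Lemma valid_orL X z D1 D2 A1 A2 C :
  valid (fill X (Meta z (D1 ++ TF A1 :: D2))) C ->
  valid (fill X (Meta z (D1 ++ TF A2 :: D2))) C ->
  valid (fill X (Meta z (D1 ++ TF (Or A1 A2) :: D2))) C.
Proof.
move=> V1 V2 m /inst_fill_focus_formula [f [p [Hf Hp ->]]].
apply: closed_cl_plug (sem_closed C) Hp _ => q [] /(inst_frame_formula Hf).
  exact: V1.
exact: V2.
Qed.

Lemma valid_orR1 Xi A1 A2 : valid Xi A1 -> valid Xi (Or A1 A2).
Proof. by move=> V1 m /V1 A1m; apply: cl_sub; left. Qed.

Lemma valid_orR2 Xi A1 A2 : valid Xi A2 -> valid Xi (Or A1 A2).
Proof. by move=> V2 m /V2 A2m; apply: cl_sub; right. Qed.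

Lemma valid_andL1 X z D1 D2 A1 A2 C :
  valid (fill X (Meta z (D1 ++ TF A1 :: D2))) C ->
  valid (fill X (Meta z (D1 ++ TF (And A1 A2) :: D2))) C.
Proof.
by move=> VC m /inst_fill_focus_formula [f [p [Hf [Hp _] ->]]]; apply/VC/(inst_frame_formula Hf).
Qed.

Lemma valid_andL2 X z D1 D2 A1 A2 C :
  valid (fill X (Meta z (D1 ++ TF A2 :: D2))) C ->
  valid (fill X (Meta z (D1 ++ TF (And A1 A2) :: D2))) C.
Proof.
by move=> VC m /inst_fill_focus_formula [f [p [Hf [_ Hp] ->]]]; apply/VC/(inst_frame_formula Hf).
Qed.

Lemma valid_andR Xi A1 A2 : valid Xi A1 -> valid Xi A2 -> valid Xi (And A1 A2).
Proof. by move=> V1 V2 m Hm; split; [apply: V1 | apply: V2]. Qed.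

Lemma valid_boxinvL X z D1 D2 A B :
  valid (fill X (Meta z (D1 ++ TF A :: D2))) B ->
  valid (fill X (Meta z (D1 ++ TB (mform (BoxInv A)) :: D2))) B.
Proof.
move=> VB m /(inst_fill_focus_seq (S := [:: TB _])) [f [_ [Hf /inst_seq1B_inv [t Ht ->] ->]]].
by move/inst_mform: Ht => At; apply/VB/(inst_frame_formula Hf).
Qed.

Lemma valid_boxinvR Xi A : valid (Meta mset0 [:: TB Xi]) A -> valid Xi (BoxInv A).
Proof. by move=> VA m /inst_seq1B /inst_Meta0; apply: VA. Qed.

Lemma valid_diamL X z D1 D2 A B :
  valid (fill X (Meta z (D1 ++ TB (mform A) :: D2))) B ->
  valid (fill X (Meta z (D1 ++ TF (Diam A) :: D2))) B.
Proof.
move=> VB m /inst_fill_focus_formula [f [p [Hf Hp ->]]].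
apply: closed_cl_plug (sem_closed B) Hp _ => _ [a /inst_mform Aa ->].
exact/VB/(inst_frame_seq (S := [:: TB _]) Hf)/inst_seq1B.
Qed.

Lemma valid_diamR Xi A : valid Xi A -> valid (Meta mset0 [:: TB Xi]) (Diam A).
Proof. by move=> VA m /inst_Meta0 /inst_seq1B_inv [t /VA At ->]; apply: cl_sub; exists t. Qed.

Lemma valid_bangL X z G1 G2 A B :
  valid (fill X (Meta (z `+` [mset A]) (G1 ++ G2))) B ->
  valid (fill X (Meta z (G1 ++ TF (Bang A) :: G2))) B.
Proof.
move=> VB m /inst_fill_focus_formula [f [p [Hf Hp ->]]].
apply: closed_cl_plug (sem_closed B) Hp _ => _ [[w w0 ->] Aw].
by rewrite -[mstoup w]mcatm0; apply/VB/(Hf _ [::])/inst_nil; apply: stoup_inst1.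
Qed.

Lemma valid_bangP X z G1 G2 A B :
  valid (fill X (Meta z (G1 ++ TF A :: G2))) B ->
  valid (fill X (Meta (z `+` [mset A]) (G1 ++ G2))) B.
Proof.
move=> VB m /(inst_fill_focus (S := [::])) [f [w [sm [Hf /stoup_inst1_inv [_ Aw]]]]].
move=> /inst_seq_nil_inv -> ->.
by rewrite mcatm0; apply/VB/(inst_frame_formula Hf).
Qed.

Lemma valid_bangR z B : z != mset0 -> valid (Meta z [::]) B -> valid (Meta z [::]) (Bang B).
Proof.
move=> z0 VB _ /inst_Meta_inv [w [g [Hw /inst_seq_nil_inv -> ->]]].
apply: cl_sub; split; last exact/VB/inst_Meta/inst_nil.
by exists w; [apply: stoup_inst_neq0 Hw z0 => ? ? [] | rewrite mcatm0].
Qed.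

Lemma valid_bangC X z1 z2 z' G1 G2 G3 C : z2 != mset0 ->
  valid (fill X (Meta (z1 `+` z2) (G1 ++ TB (Meta (z' `+` z2) G2) :: G3))) C ->
  valid (fill X (Meta (z1 `+` z2 `+` z') (G1 ++ G2 ++ G3))) C.
Proof.
move=> z20 VC m; rewrite -msetDA => /(inst_fill_focus (S := G2)).
move=> [f [_ [sm [Hf /stoupD_inst_inv [w2 [w' [H2 H' ->]]] HS ->]]]].
have := VC _ (Hf _ [:: TB _] _ _ H2 (inst_seq1B (inst_Meta (stoup_instD H' H2) HS))).
have w20 : w2 != mset0 by apply: stoup_inst_neq0 H2 z20 => ? ? [].
by apply: closed_rule (sem_closed C) _ => g D; rewrite !plug_comp; apply: plug_bangC.
Qed.

Lemma derivable_valid T C : derivable T C -> valid T C.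
Proof.
elim=> {T C} *;
  by [ apply: valid_ax | apply: valid_oneR | apply: valid_overL | apply: valid_overR
     | apply: valid_underL | apply: valid_underR | apply: valid_prodL | apply: valid_prodR
     | apply: valid_oneL | apply: valid_orL | apply: valid_orR1 | apply: valid_orR2
     | apply: valid_andL1 | apply: valid_andL2 | apply: valid_andR | apply: valid_boxinvL
     | apply: valid_boxinvR | apply: valid_diamL | apply: valid_diamR | apply: valid_bangL
     | apply: valid_bangP | apply: valid_bangR | apply: valid_bangC ].
Qed.

Theorem theorem2 (xi zeta : stoup) (Pi G1 G2 : seq tterm) (A C : formula) (X : ctx) :
  derivable (Meta xi Pi) A ->
  derivable (fill X (Meta zeta (G1 ++ TF A :: G2))) C ->
  derivable (fill X (Meta (msetD xi zeta) (G1 ++ Pi ++ G2))) C.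
Proof.
move=> dA dC.
have A_xiPi : sem A (Meta xi Pi) := derivable_valid dA (inst_refl _).
have cut_inst : inst (Meta zeta (G1 ++ TF A :: G2)) (Meta (xi `+` zeta) (G1 ++ Pi ++ G2)).
  have -> : Meta (xi `+` zeta) (G1 ++ Pi ++ G2) =
      mcat (mstoup zeta) (mcat (Meta mset0 G1) (mcat (Meta xi Pi) (Meta mset0 G2))).
    by meta_eq.
  apply: inst_Meta (inst_stoup_refl zeta) _.
  exact: inst_seq_cat (inst_seq_refl G1) (inst_consF A_xiPi (inst_seq_refl G2)).
exact: sem_derivable (derivable_valid dC (inst_fill X cut_inst)).
Qed.
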